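(* Let $T\ge 1$ and $t\ge 1$ be integers and let $g_{T,t}:\mathbb{R}^{Tt}\to\mathbb{R}$ be the function defined in the context. Then: (1) the function $\mathbf{x}\mapsto g_{T,t}(\mathbf{y}-\mathbf{x})$ is a zero-chain; (2) $\mathbf{0}$ is a minimizer of $g_{T,t}$, $\inf_{\mathbf{x}} g_{T,t}(\mathbf{x}) = 0$, and $g_{T,t}(\mathbf{x})\le \frac12\mathbf{x}^\top(\mathbf{B}+\mathbf{I})\mathbf{x}$ for all $\mathbf{x}\in\mathbb{R}^{Tt}$; (3) $g_{T,t}$ is $37$-smooth; (4) there is a universal constant $C_3>0$ (independent of $T$ and $t$) such that $g_{T,t}$ satisfies the $\frac{1}{C_3T}$-PL condition.
   Context: A differentiable $f:\mathbb{R}^d\to\mathbb{R}$ is $L$-smooth if $\|\nabla f(\mathbf{x})-\nabla f(\mathbf{z})\|\le L\|\mathbf{x}-\mathbf{z}\|$ for all $\mathbf{x},\mathbf{z}$. It satisfies the $\mu$-PL condition ($\mu>0$) if $\|\nabla f(\mathbf{x})\|^2\ge 2\mu\,(f(\mathbf{x})-\inf_{\mathbf{z}} f(\mathbf{z}))$ for all $\mathbf{x}$. For $\mathbf{x}\in\mathbb{R}^d$, $\mathrm{supp}(\mathbf{x})=\{i:\mathbf{x}_i\neq 0\}$. A differentiable $f:\mathbb{R}^d\to\mathbb{R}$ is a zero-chain if for every $\mathbf{x}$ and every $k\in\{0,1,\dots,d\}$, $\mathrm{supp}(\mathbf{x})\subseteq\{1,\dots,k\}$ implies $\mathrm{supp}(\nabla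 f(\mathbf{x}))\subseteq\{1,\dots,k+1\}$. Construction. For a constant $y>0$ define $v_y:\mathbb{R}\to\mathbb{R}$ by $v_y(x)=\frac12x^2$ if $x\le\frac{31}{32}y$; $v_y(x)=\frac12x^2-16(x-\frac{31}{32}y)^2$ if $\frac{31}{32}y<x\le y$; $v_y(x)=\frac12x^2-\frac{y^2}{32}+16(x-\frac{33}{32}y)^2$ if $y<x\le\frac{33}{32}y$; $v_y(x)=\frac12x^2-\frac{y^2}{32}$ if $x>\frac{33}{32}y$. For $\mathbf{x}\in\mathbb{R}^{Tt}$, with the convention $\mathbf{x}_0=0$, let $$q_{T,t}(\mathbf{x})=\frac12\sum_{i=0}^{t-1}\Big[\big(\tfrac78\mathbf{x}_{iT}-\mathbf{x}_{iT+1}\big)^2+\sum_{j=1}^{T-1}(\mathbf{x}_{iT+j+1}-\mathbf{x}_{iT+j})^2\Big],$$ and let $\mathbf{B}$ be the symmetric positive semidefinite $Tt\times Tt$ matrix with $q_{T,t}(\mathbf{x})=\frac12\mathbf{x}^\top\mathbf{B}\mathbf{x}$. Let $\mathbf{y}\in\mathbb{R}^{Tt}$ be given by $\mathbf{y}_{qT+b}=(7/8)^q$ for $q\in\{0,\dots,t-1\}$, $b\in\{1,\dots,T\}$. Define $g_{T,t}(\mathbf{x})=q_{T,t}(\mathbf{x})+\sum_{i=1}^{Tt}v_{\mathbf{y}_i}(\mathbf{x}_i)$. *)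

(* R : realType, vectors in R^d are row vectors 'rV[R]_d,
   coordinates are 0-based (paper index p corresponds to ordinal p-1). *)
From HB Require Import structures.
From mathcomp Require Import all_boot all_order all_algebra.
From mathcomp Require Import all_classical all_reals all_analysis.
Set Implicit Arguments. Unset Strict Implicit. Unset Printing Implicit Defensive.
Import Order.TTheory GRing.Theory Num.Theory.
Import numFieldNormedType.Exports.
Local Open Scope classical_set_scope.
Local Open Scope ring_scope.

Section Defs.
Variable R : realType.

(* Euclidean norm on R^d (the library's norm on 'rV is the sup norm). *)
Definition enorm (d : nat) (x : 'rV[R]_d) : R :=
  Num.sqrt (\sum_(i < d) x 0 i ^+ 2).

Definition grad (d : nat) (f : 'rV[R]_d -> R) (x : 'rV[R]_d) : 'rV[R]_d :=
  \row_(i < d) ('d f x (delta_mx 0 i : 'rV[R]_d)).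

Definition diffble (d : nat) (f : 'rV[R]_d -> R) : Prop :=
  forall x : 'rV[R]_d, differentiable f x.

Definition L_smooth (d : nat) (f : 'rV[R]_d -> R) (L : R) : Prop :=
  diffble f /\
  forall x z : 'rV[R]_d, enorm (grad f x - grad f z) <= L * enorm (x - z).

Definition PL (d : nat) (f : 'rV[R]_d -> R) (mu : R) : Prop :=
  diffble f /\
  forall x : 'rV[R]_d,
    enorm (grad f x) ^+ 2 >= 2 * mu * (f x - inf (range f)).

(* zero-chain; supp(x) ⊆ {1..k} (1-based) means: x_i <> 0 -> i < k (0-based). *)
Definition zero_chain (d : nat) (f : 'rV[R]_d -> R) : Prop :=
  diffble f /\
  forall (x : 'rV[R]_d) (k : nat), (k <= d)%N ->
    (forall i : 'I_d, x 0 i != 0 -> (i < k)%N) ->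
    (forall i : 'I_d, grad f x 0 i != 0 -> (i < k.+1)%N).

Definition v_fun (y x : R) : R :=
  if x <= 31/32 * y then x ^+ 2 / 2
  else if x <= y then x ^+ 2 / 2 - 16 * (x - 31/32 * y) ^+ 2
  else if x <= 33/32 * y then x ^+ 2 / 2 - y ^+ 2 / 32 + 16 * (x - 33/32 * y) ^+ 2
  else x ^+ 2 / 2 - y ^+ 2 / 32.

(* paper coordinate x_p (1-based), with the convention x_0 = 0 *)
Definition pc (d : nat) (x : 'rV[R]_d) (p : nat) : R :=
  match p with
  | 0 => 0
  | p'.+1 => match insub p' with Some i => x 0 i | None => 0 end
  end.

Definition q_fun (T t : nat) (x : 'rV[R]_(T * t)) : R :=
  1/2 * \sum_(i < t)
    ((7/8 * pc x (i * T) - pc x (i * T + 1)) ^+ 2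
     + \sum_(1 <= j < T) (pc x (i * T + j + 1) - pc x (i * T + j)) ^+ 2).

(* B: the unique symmetric matrix with q(x) = 1/2 x^T B x (polarization). *)
Definition Bmat (T t : nat) : 'M[R]_(T * t) :=
  \matrix_(i, j) (@q_fun T t (delta_mx 0 i + delta_mx 0 j)
                  - @q_fun T t (delta_mx 0 i) - @q_fun T t (delta_mx 0 j)).

(* y_{qT+b} = (7/8)^q, b in 1..T; 0-based index k = qT+b-1, so q = k %/ T. *)
Definition yvec (T t : nat) : 'rV[R]_(T * t) :=
  \row_(k < T * t) (7/8 : R) ^+ (k %/ T).

Definition g_fun (T t : nat) (x : 'rV[R]_(T * t)) : R :=
  @q_fun T t x + \sum_(i < T * t) v_fun (@yvec T t 0 i) (x 0 i).

End Defs.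

(* With the links r_k(x) = x_{k+1} - a_k x_k, where a_k = 7/8 when the link
   enters a new block of T coordinates and 1 otherwise, q = |r(x)|^2 / 2, so B is
   the Gram matrix of the links, and g is q plus separable piecewise-quadratic
   terms v_y with 33-Lipschitz derivatives; this yields an explicit gradient and
   37-smoothness. The vector y annihilates every link but the first and
   v_y'(y) = 0, which makes x |-> g(y - x) a zero-chain. For the PL inequality,
   v_y(x) <= x v_y'(x) / 2 except in the window (31y/32, 33y/32), where the defect
   is at most y^2, so g <= 4/7 |grad g|^2 + 2 (sum of y_i^2 over the coordinates
   lying in their window). If m is the first such coordinate, the decay of y by
   7/8 every T coordinates bounds that sum by (64/15) T y_m^2, and a discrete
   maximum principle along the chain shows that some coordinate of grad g is at
   least y_m / 10. *)

From HB Require Import structures.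
From mathcomp Require Import all_boot all_order all_algebra.
From mathcomp Require Import all_classical all_reals all_analysis.
From mathcomp Require Import ring lra zify.
Import Order.TTheory GRing.Theory Num.Theory.
Import numFieldNormedType.Exports.
Local Open Scope classical_set_scope.
Local Open Scope ring_scope.
Set Implicit Arguments. Unset Strict Implicit. Unset Printing Implicit Defensive.

Section RowDot.
Variable R : realType.

Lemma ler_coef_mx_norm m n (A : 'M[R]_(m, n)) i j : `|A i j| <= `|A|.
Proof.
have /mapP[k _ ->] : `|A i j| \in [seq `|A x.1 x.2| | x : 'I_m * 'I_n].
  by apply/mapP; exists (i, j) => //=; rewrite mem_enum.
by rewrite [leRHS]/Num.norm /= mx_normrE; apply/bigmax_geP; right => /=; exists k.
Qed.

Lemma sqr_coef_le_norm m n (A : 'M[R]_(m, n)) i j : A i j ^+ 2 <= `|A| ^+ 2.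
Proof. by rewrite -real_normK ?num_real // lerXn2r ?nnegrE ?ler_coef_mx_norm. Qed.

Definition rdot d (c h : 'rV[R]_d) : R := \sum_(i < d) c 0 i * h 0 i.

Lemma rdot_is_linear d (c : 'rV[R]_d) : linear (rdot c).
Proof.
move=> a u v; rewrite /rdot scaler_sumr -big_split /=; apply: eq_bigr => i _.
by rewrite !mxE mulrDr mulrCA.
Qed.

HB.instance Definition _ d (c : 'rV[R]_d) :=
  GRing.isLinear.Build R 'rV[R]_d R *:%R (rdot c) (rdot_is_linear c).

Lemma rdotDl d (c1 c2 h : 'rV[R]_d) : rdot (c1 + c2) h = rdot c1 h + rdot c2 h.
Proof. by rewrite /rdot -big_split; apply: eq_bigr => i _; rewrite mxE mulrDl. Qed.

Lemma rdotNl d (c h : 'rV[R]_d) : rdot (- c) h = rdot c (- h).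
Proof. by apply: eq_bigr => i _; rewrite !mxE mulrN mulNr. Qed.

Lemma rdot_delta d (c : 'rV[R]_d) (i : 'I_d) : rdot c (delta_mx 0 i) = c 0 i.
Proof.
rewrite /rdot (bigD1 i) //= big1 => [|j /negbTE ji]; rewrite mxE.
  by rewrite !eqxx mulr1 addr0.
by rewrite ji andbF mulr0.
Qed.

Lemma rdot_continuous d (c : 'rV[R]_d) : continuous (rdot c).
Proof.
apply/(@linear_bounded_continuous R _ _ (rdot c))/linear_boundedP.
near=> r => h; apply: (@le_trans _ _ ((\sum_i `|c 0 i|) * `|h|)).
  rewrite /rdot mulr_suml; apply: le_trans (ler_norm_sum _ _ _) _.
  by apply: ler_sum => i _; rewrite normrM ler_wpM2l ?ler_coef_mx_norm.
by apply: ler_wpM2r.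
Unshelve. all: by end_near. Qed.

Lemma differentiable_quadratic_rem d (f : 'rV[R]_d -> R) x (c : 'rV[R]_d) K :
  (forall h, `|f (x + h) - f x - rdot c h| <= K * `|h| ^+ 2) ->
  differentiable f x /\ 'd f x = rdot c :> (_ -> _).
Proof.
move=> rem.
have e : f \o shift x = cst (f x) + rdot c +o_ (nbhs (0 : 'rV[R]_d)) id.
  apply/eqaddoP => eps eps0.
  have K1 : 0 < `|K| + 1 by rewrite ltr_wpDl.
  near=> h; rewrite /= !fctE.
  have -> : f (h + x) - (f x + rdot c h) = f (x + h) - f x - rdot c h.
    by rewrite [h + x]addrC opprD addrA.
  apply: le_trans (rem h) _.
  have hs : `|h| <= eps / (`|K| + 1).
    near: h; apply: (@nbhs0_le _ 'rV[R]_d); by rewrite divr_gt0.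
  rewrite expr2 mulrA ler_wpM2r //.
  apply: (@le_trans _ _ (`|K| * `|h|)); first by rewrite ler_wpM2r // ler_norm.
  apply: le_trans (ler_wpM2l (normr_ge0 K) hs) _.
  rewrite mulrA ler_pdivrMr //.
  have := normr_ge0 K; nra.
have dfE := diff_unique (@rdot_continuous d c) e.
split; last exact: dfE.
by apply/diff_locallyP; rewrite dfE; split => //; exact: (@rdot_continuous d c).
Unshelve. all: by end_near. Qed.

Lemma quad_form1 d (x : 'rV[R]_d) : (x *m 1%:M *m x^T) 0 0 = \sum_(i < d) x 0 i ^+ 2.
Proof. by rewrite mulmx1 !mxE; apply: eq_bigr => i _; rewrite !mxE expr2. Qed.

End RowDot.

Section Sums.
Variable V : nmodType.

Lemma big_ord_mul_blocks (F : nat -> V) (T t : nat) :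
  \sum_(k < T * t) F k = \sum_(i < t) \sum_(j < T) F (i * T + j)%N.
Proof.
elim: t => [|t IH]; first by rewrite muln0 !big_ord0.
rewrite big_ord_recr /= -IH mulnS addnC big_split_ord /=.
by congr (_ + _); apply: eq_bigr => j _; rewrite mulnC.
Qed.

Lemma big_ord_shift (F : nat -> V) (n : nat) : F 0%N = 0 ->
  \sum_(k < n) F k = \sum_(k < n) (if (k.+1 < n)%N then F k.+1 else 0).
Proof.
move=> F0; case: n => [|n]; first by rewrite !big_ord0.
rewrite big_ord_recl F0 add0r big_ord_recr /= ltnn addr0.
by apply: eq_bigr => i _; rewrite ltnS ltn_ord.
Qed.

Lemma big_ord_tail (F : nat -> V) M N :
  \sum_(i < N) (if (M <= i)%N then F (i - M)%N else 0) = \sum_(j < N - M) F j.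
Proof.
elim: N => [|N IH]; first by rewrite !big_ord0.
rewrite big_ord_recr /= IH; case: (leqP M N) => h.
  by rewrite subSn // big_ord_recr.
have e1 : (N - M = 0)%N by apply/eqP; rewrite subn_eq0 ltnW.
have e2 : (N.+1 - M = 0)%N by apply/eqP; rewrite subn_eq0.
by rewrite e1 e2 addr0.
Qed.

End Sums.

Ltac case_ifs :=
  repeat match goal with |- context [if ?c then _ else _] => case: ifP => ? end;
  repeat match goal with H : (?a <= ?b) = false |- _ => move/negbT: H; rewrite -ltNge => H end.

Section PiecewiseQuadratic.
Variable R : realType.
Implicit Types y x z h : R.

Definition ramp x : R := if x <= 0 then 0 else x.

Definition v_deriv y x : R :=
  if x <= 31/32 * y then x
  else if x <= y then x - 32 * (x - 31/32 * y)
  else if x <= 33/32 * y then x + 32 * (x - 33/32 * y)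
  else x.

Definition in_window y x := (31/32 * y < x) && (x < 33/32 * y).

Lemma v_funE y x : 0 < y ->
  v_fun y x = x ^+ 2 / 2 - 16 * ramp (x - 31/32 * y) ^+ 2 + 32 * ramp (x - y) ^+ 2
              - 16 * ramp (x - 33/32 * y) ^+ 2.
Proof. by move=> y0; rewrite /v_fun /ramp; case_ifs; try lra; nra. Qed.

Lemma v_derivE y x : 0 < y ->
  v_deriv y x = x - 32 * ramp (x - 31/32 * y) + 64 * ramp (x - y)
                - 32 * ramp (x - 33/32 * y).
Proof. by move=> y0; rewrite /v_deriv /ramp; case_ifs; lra. Qed.

Lemma ramp_sqr_expansion z h :
  `|ramp (z + h) ^+ 2 - ramp z ^+ 2 - 2 * ramp z * h| <= h ^+ 2.
Proof. by rewrite /ramp; case_ifs; rewrite ler_norml; apply/andP; split; nra. Qed.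

Lemma v_fun_expansion y x h : 0 < y ->
  `|v_fun y (x + h) - v_fun y x - v_deriv y x * h| <= 65 * h ^+ 2.
Proof.
move=> y0; rewrite !v_funE // v_derivE //.
have := ramp_sqr_expansion (x - 31/32 * y) h.
have := ramp_sqr_expansion (x - y) h.
have := ramp_sqr_expansion (x - 33/32 * y) h.
rewrite -!(addrAC x _ h) !ler_norml => /andP[? ?] /andP[? ?] /andP[? ?].
by apply/andP; split; lra.
Qed.

Lemma v_deriv_lipschitz y x z : 0 < y ->
  `|v_deriv y x - v_deriv y z| <= 33 * `|x - z|.
Proof.
move=> y0; have h1 := ler_norm (x - z).
have h2 : z - x <= `|x - z| by rewrite -normrN opprB ler_norm.
by rewrite /v_deriv; case_ifs; rewrite ler_norml; apply/andP; split; lra.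
Qed.

Lemma v_fun_ge y x : 0 < y -> 7/16 * x ^+ 2 <= v_fun y x.
Proof. by move=> y0; rewrite /v_fun; case_ifs; nra. Qed.

Lemma v_fun_le y x : 0 < y -> v_fun y x <= x ^+ 2 / 2.
Proof. by move=> y0; rewrite /v_fun; case_ifs; nra. Qed.

Lemma v_fun0 y : 0 < y -> v_fun y 0 = 0.
Proof. by move=> y0; rewrite /v_fun; case_ifs; lra. Qed.

Lemma v_deriv_id y : 0 < y -> v_deriv y y = 0.
Proof. by move=> y0; rewrite /v_deriv; case_ifs; lra. Qed.

Lemma v_deriv_out_window y x : 0 < y -> ~~ in_window y x -> v_deriv y x = x.
Proof.
by move=> y0; rewrite /in_window /v_deriv negb_and -!leNgt => /orP[]?; case_ifs; lra.
Qed.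

Lemma v_deriv_in_window_ge0 y x : 0 < y -> in_window y x -> 0 <= v_deriv y x.
Proof. by move=> y0; rewrite /in_window /v_deriv => /andP[? ?]; case_ifs; lra. Qed.

Lemma v_fun_le_deriv y x : 0 < y ->
  v_fun y x <= x * v_deriv y x / 2 + (if in_window y x then y ^+ 2 else 0).
Proof.
move=> y0; have := v_fun_le x y0; case: ifP => hS.
  have := v_deriv_in_window_ge0 y0 hS; move: hS => /andP[? ?]; nra.
by rewrite v_deriv_out_window ?hS //; lra.
Qed.

End PiecewiseQuadratic.

Section PaperCoordinates.
Variables (R : realType) (n : nat).
Implicit Types x z : 'rV[R]_n.

Lemma pc0 x : pc x 0 = 0. Proof. by []. Qed.

Lemma pcS x (i : 'I_n) : pc x i.+1 = x 0 i.
Proof. by rewrite /pc valK. Qed.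

Lemma pc_out x p : (n <= p)%N -> pc x p.+1 = 0.
Proof. by move=> h; rewrite /pc insubF // ltnNge h. Qed.

Lemma pc_scaleD (a : R) x z p : pc (a *: x + z) p = a * pc x p + pc z p.
Proof.
case: p => [|p] /=; first by rewrite mulr0 addr0.
by case: insubP => [i _ _|_]; rewrite ?mxE ?mulr0 ?addr0.
Qed.

Lemma pcD x z p : pc (x + z) p = pc x p + pc z p.
Proof. by rewrite -[x]scale1r pc_scaleD mul1r scale1r. Qed.

Lemma pc_zero p : pc (0 : 'rV[R]_n) p = 0.
Proof. by case: p => [|p] //=; case: insubP => [i _ _|_]; rewrite ?mxE. Qed.

Lemma pc_norm_le x p : `|pc x p| <= `|x|.
Proof.
case: p => [|p] /=; first by rewrite normr0.
by case: insubP => [i _ _|_]; [exact: ler_coef_mx_norm | rewrite normr0].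
Qed.

End PaperCoordinates.

Section Gradient.
Variables (R : realType) (T t : nat).
Local Notation n := (T * t)%N.
Implicit Types x h : 'rV[R]_n.

Definition link_coef (k : nat) : R := if (k %% T == 0)%N then 7/8 else 1.
Definition link x k := pc x k.+1 - link_coef k * pc x k.

Lemma link_coef_ge k : 7/8 <= link_coef k.
Proof. by rewrite /link_coef; case: ifP => _; lra. Qed.

Lemma link_coef_le k : link_coef k <= 1.
Proof. by rewrite /link_coef; case: ifP => _; lra. Qed.

Lemma q_funE x : (0 < T)%N -> q_fun x = 1/2 * \sum_(k < n) link x k ^+ 2.
Proof.
move=> T0; rewrite /q_fun (big_ord_mul_blocks (fun k => link x k ^+ 2)).
congr (_ * _); apply: eq_bigr => i _.
rewrite -(big_mkord xpredT (fun j => link x (i * T + j) ^+ 2)) big_ltn //= addn0.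
congr (_ + _); first by rewrite /link /link_coef modnMl eqxx addn1 -sqrrN opprB.
apply: eq_big_nat => j /andP[j1 jT].
rewrite /link /link_coef modnMDl modn_small // (_ : (j == 0)%N = false).
  by rewrite mul1r !addn1.
by case: j j1 {jT}.
Qed.

Lemma linkD x h k : link (x + h) k = link x k + link h k.
Proof. by rewrite /link !pcD; ring. Qed.

Lemma linkZ a x k : link (a *: x) k = a * link x k.
Proof. by rewrite /link -[a *: x]addr0 !pc_scaleD !pc_zero !addr0; ring. Qed.

Lemma linkN x k : link (- x) k = - link x k.
Proof. by rewrite -scaleN1r linkZ mulN1r. Qed.

Lemma linkB x z k : link (x - z) k = link x k - link z k.
Proof. by rewrite linkD linkN. Qed.

Lemma sqr_link_le h k : link h k ^+ 2 <= 4 * `|h| ^+ 2.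
Proof.
have nlink : `|link h k| <= 2 * `|h|.
  rewrite /link; apply: le_trans (ler_normB _ _) _.
  rewrite normrM (ger0_norm (le_trans _ (link_coef_ge k))); last lra.
  have := pc_norm_le h k.+1; have := pc_norm_le h k.
  have := link_coef_le k; have := link_coef_ge k; have := normr_ge0 (pc h k); nra.
rewrite -real_normK ?num_real //; have := normr_ge0 (link h k); nra.
Qed.

Lemma yvec_gt0 (i : 'I_n) : 0 < yvec R T t 0 i.
Proof. by rewrite mxE exprn_gt0. Qed.

Definition gradq x : 'rV[R]_n :=
  \row_(i < n) (link x i - (if (i.+1 < n)%N then link_coef i.+1 * link x i.+1 else 0)).
Definition gradv x : 'rV[R]_n := \row_(i < n) v_deriv (yvec R T t 0 i) (x 0 i).
Definition gradg x := gradq x + gradv x.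

Lemma rdot_gradq x h : rdot (gradq x) h = \sum_(k < n) link x k * link h k.
Proof.
have -> : \sum_(k < n) link x k * link h k =
    \sum_(k < n) link x k * pc h k.+1 - \sum_(k < n) link x k * (link_coef k * pc h k).
  by rewrite -sumrB; apply: eq_bigr => k _; rewrite /link mulrBr.
rewrite (big_ord_shift (F := fun k => link x k * (link_coef k * pc h k))); last first.
  by rewrite pc0 !mulr0.
rewrite /rdot -sumrB; apply: eq_bigr => k _.
rewrite mxE -pcS mulrBl; congr (_ - _).
by case: ifP => _; rewrite ?mul0r // mulrA [link x _ * _]mulrC.
Qed.

Lemma g_fun_expansion x h : (0 < T)%N ->
  `|g_fun (x + h) - g_fun x - rdot (gradg x) h| <= (67 * n%:R) * `|h| ^+ 2.
Proof.
move=> T0; set y := yvec R T t.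
have quad_part : q_fun (x + h) - q_fun x - rdot (gradq x) h =
    1/2 * \sum_(k < n) link h k ^+ 2.
  rewrite !q_funE // rdot_gradq !mulr_sumr -!sumrB; apply: eq_bigr => k _.
  by rewrite linkD; move: (link x k) (link h k) => a b; field.
have sep_part : \sum_(i < n) v_fun (y 0 i) ((x + h) 0 i)
    - \sum_(i < n) v_fun (y 0 i) (x 0 i) - rdot (gradv x) h =
    \sum_(i < n) (v_fun (y 0 i) (x 0 i + h 0 i) - v_fun (y 0 i) (x 0 i)
                  - v_deriv (y 0 i) (x 0 i) * h 0 i).
  by rewrite /rdot -!sumrB; apply: eq_bigr => i _; rewrite !mxE.
have -> : g_fun (x + h) - g_fun x - rdot (gradg x) h =
    (q_fun (x + h) - q_fun x - rdot (gradq x) h) +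
    (\sum_(i < n) v_fun (y 0 i) ((x + h) 0 i)
     - \sum_(i < n) v_fun (y 0 i) (x 0 i) - rdot (gradv x) h).
  by rewrite /g_fun /gradg rdotDl; ring.
rewrite quad_part sep_part.
apply: le_trans (ler_normD _ _) _.
have qbound : `|1/2 * \sum_(k < n) link h k ^+ 2| <= 1/2 * ((4 * `|h| ^+ 2) *+ n).
  rewrite normrM ger0_norm; last lra.
  apply: ler_wpM2l; first lra.
  rewrite -[n in _ *+ n]card_ord -sumr_const; apply: le_trans (ler_norm_sum _ _ _) _.
  apply: ler_sum => k _.
  by rewrite normrX real_normK ?num_real ?sqr_link_le.
have vbound : `|\sum_(i < n) (v_fun (y 0 i) (x 0 i + h 0 i) - v_fun (y 0 i) (x 0 i)
     - v_deriv (y 0 i) (x 0 i) * h 0 i)| <= (65 * `|h| ^+ 2) *+ n.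
  rewrite -[n in _ *+ n]card_ord -sumr_const; apply: le_trans (ler_norm_sum _ _ _) _.
  apply: ler_sum => i _; apply: le_trans (v_fun_expansion _ _ (yvec_gt0 i)) _.
  by rewrite ler_wpM2l // sqr_coef_le_norm.
apply: le_trans (lerD qbound vbound) _.
rewrite -(mulr_natr (4 * _)) -(mulr_natr (65 * _)); move: (`|h| ^+ 2) (n%:R) => u m; lra.
Qed.

Lemma g_fun_differential x : (0 < T)%N ->
  differentiable (@g_fun R T t) x /\ 'd (@g_fun R T t) x = rdot (gradg x) :> (_ -> _).
Proof.
by move=> T0; apply: (differentiable_quadratic_rem (K := 67 * n%:R)) => h; exact: g_fun_expansion.
Qed.

Lemma grad_g_fun x : (0 < T)%N -> grad (@g_fun R T t) x = gradg x.
Proof.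
move=> T0; apply/rowP => i; rewrite mxE.
by have [_ ->] := g_fun_differential x T0; rewrite rdot_delta.
Qed.

End Gradient.

Section ZeroChain.
Variables (R : realType) (T t : nat).
Hypothesis T0 : (0 < T)%N.
Local Notation n := (T * t)%N.
Local Notation y := (yvec R T t).
Implicit Types x : 'rV[R]_n.

Lemma link_yvec j : (0 < j < n)%N -> link y j = 0.
Proof.
case/andP=> j0 jn; have jn' : (j.-1 < n)%N by rewrite (leq_ltn_trans (leq_pred j)).
rewrite /link (pcS y (Ordinal jn)) -[in pc y j](prednK j0) (pcS y (Ordinal jn')) !mxE /=.
rewrite -{1}(prednK j0) divnS // /link_coef /dvdn prednK //.
by case: ifP => _; rewrite ?add1n ?exprS ?add0n ?mul1r ?subrr.
Qed.

Definition g_shifted x := @g_fun R T t (y - x).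

Lemma g_shifted_differential x :
  differentiable g_shifted x /\ 'd g_shifted x = rdot (- gradg (y - x)) :> (_ -> _).
Proof.
apply: (differentiable_quadratic_rem (K := 67 * n%:R)) => h.
rewrite /g_shifted rdotNl (_ : y - (x + h) = (y - x) + (- h)); last by rewrite opprD addrA.
by have := g_fun_expansion (y - x) (- h) T0; rewrite normrN.
Qed.

Lemma grad_g_shifted x : grad g_shifted x = - gradg (y - x).
Proof.
apply/rowP => i; rewrite mxE.
by have [_ ->] := g_shifted_differential x; rewrite rdot_delta.
Qed.

Lemma zero_chain_g_shifted : zero_chain g_shifted.
Proof.
split=> [x|x k _ supp_x i]; first by have [] := g_shifted_differential x.
rewrite grad_g_shifted; case: (ltnP i k.+1) => // ki.
rewrite mxE oppr_eq0; suff -> : gradg (y - x) 0 i = 0 by rewrite eqxx.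
have i0 : (0 < i)%N by rewrite (leq_ltn_trans (leq0n k)).
have pcx p : (k <= p)%N -> pc x p.+1 = 0.
  move=> kp; case: (ltnP p n) => pn; last exact: pc_out.
  rewrite (pcS x (Ordinal pn)); apply/eqP; apply: contraTT kp => /supp_x /= pk.
  by rewrite -ltnNge.
have link_x j : (k < j)%N -> link x j = 0.
  move=> kj; have j0 : (0 < j)%N by rewrite (leq_ltn_trans (leq0n k)).
  rewrite /link pcx ?(ltnW kj) // -(prednK j0) pcx ?mulr0 ?subr0 //.
  by rewrite -ltnS prednK.
have xi : x 0 i = 0 by rewrite -pcS pcx // ltnW.
rewrite !mxE !linkB link_yvec ?i0 ?ltn_ord // link_x // subr0 sub0r xi subr0.
rewrite v_deriv_id ?yvec_gt0 // addr0.
case: ifP => hin; last by rewrite oppr0.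
by rewrite link_yvec ?hin // link_x ?(ltn_trans ki) // subr0 mulr0 oppr0.
Qed.

End ZeroChain.

Section Bounds.
Variables (R : realType) (T t : nat).
Hypothesis T0 : (0 < T)%N.
Local Notation n := (T * t)%N.
Implicit Types x : 'rV[R]_n.

Lemma q_fun_ge0 x : 0 <= @q_fun R T t x.
Proof.
rewrite q_funE //; apply: mulr_ge0; first lra.
by apply: sumr_ge0 => k _; exact: sqr_ge0.
Qed.

Lemma sum_v_fun_ge x :
  7/16 * \sum_(i < n) x 0 i ^+ 2 <= \sum_(i < n) v_fun (yvec R T t 0 i) (x 0 i).
Proof. by rewrite mulr_sumr; apply: ler_sum => i _; apply/v_fun_ge/yvec_gt0. Qed.

Lemma g_fun_ge0 x : 0 <= @g_fun R T t x.
Proof.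
rewrite /g_fun addr_ge0 ?q_fun_ge0 // (le_trans _ (sum_v_fun_ge x)) //.
apply: mulr_ge0; first lra.
by apply: sumr_ge0 => i _; exact: sqr_ge0.
Qed.

Lemma g_fun0 : @g_fun R T t 0 = 0.
Proof.
rewrite /g_fun q_funE // big1 => [|k _]; last by rewrite /link !pc_zero mulr0 subr0 expr0n.
by rewrite mulr0 add0r big1 // => i _; rewrite [X in v_fun _ X]mxE v_fun0 ?yvec_gt0.
Qed.

Lemma inf_g_fun : inf (range (@g_fun R T t)) = 0.
Proof.
apply/eqP; rewrite eq_le; apply/andP; split.
  have lb : has_lbound (range (@g_fun R T t)) by exists 0 => _ [x _ <-]; exact: g_fun_ge0.
  by apply: (ge_inf lb); exists 0 => //; rewrite g_fun0.
apply: lb_le_inf; first by exists (@g_fun R T t 0), 0.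
by move=> _ [x _ <-]; exact: g_fun_ge0.
Qed.

Definition link_mx : 'M[R]_n := \matrix_(i, k) link (delta_mx 0 i : 'rV[R]_n) k.

Lemma Bmat_link_mx : Bmat R T t = link_mx *m link_mx^T.
Proof.
apply/matrixP => i j; rewrite !mxE !q_funE // -!mulrBr -!sumrB mulr_sumr.
apply: eq_bigr => k _; rewrite !mxE !linkD.
by move: (link _ k) (link _ k) => a b; field.
Qed.

Lemma mul_link_mx x : x *m link_mx = \row_(k < n) link x k.
Proof.
apply/rowP => k; rewrite !mxE {2}(row_sum_delta x).
elim/big_rec2: _ => [|i s u _ ->]; first by rewrite /link !pc_zero mulr0 subr0.
by rewrite linkD linkZ mxE.
Qed.

Lemma quad_Bmat x : (x *m Bmat R T t *m x^T) 0 0 = \sum_(k < n) link x k ^+ 2.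
Proof.
rewrite Bmat_link_mx !mulmxA -mulmxA -trmx_mul mul_link_mx !mxE.
by apply: eq_bigr => k _; rewrite !mxE expr2.
Qed.

Lemma g_fun_le_quad x :
  @g_fun R T t x <= 1/2 * (x *m (Bmat R T t + 1%:M) *m x^T) 0 0.
Proof.
rewrite mulmxDr mulmxDl mxE quad_Bmat quad_form1 /g_fun q_funE // mulrDr lerD2l.
rewrite mulr_sumr; apply: ler_sum => i _.
by have := v_fun_le (x 0 i) (yvec_gt0 R i); lra.
Qed.

End Bounds.

Section SquaredNorm.
Variable R : realType.

Definition sqnorm d (u : 'rV[R]_d) := \sum_(i < d) u 0 i ^+ 2.

Lemma sqnorm_ge0 d (u : 'rV[R]_d) : 0 <= sqnorm u.
Proof. by apply: sumr_ge0 => i _; exact: sqr_ge0. Qed.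

(* The weights are chosen so that [16 * 37/4 + 1089 * 37/33 = 37 ^+ 2]. *)
Lemma sqnormD_le d (a b : 'rV[R]_d) : sqnorm (a + b) <= 37/4 * sqnorm a + 37/33 * sqnorm b.
Proof.
rewrite /sqnorm !mulr_sumr -big_split; apply: ler_sum => i _; rewrite mxE.
move: (a 0 i) (b 0 i) => p q; rewrite -subr_ge0.
have -> : 37/4 * p ^+ 2 + 37/33 * q ^+ 2 - (p + q) ^+ 2 = (33 * p - 4 * q) ^+ 2 / 132.
  by field.
by rewrite divr_ge0 ?sqr_ge0.
Qed.

Lemma sqr_pc_le_sqnorm n (u : 'rV[R]_n) p : (0 < p <= n)%N ->
  pc u p ^+ 2 <= sqnorm u.
Proof.
case: p => [//|i] /andP[_ i_lt_n]; rewrite (pcS u (Ordinal i_lt_n)) /sqnorm.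
by rewrite (bigD1 (Ordinal i_lt_n)) //= lerDl sumr_ge0 // => j _; exact: sqr_ge0.
Qed.

Lemma sum_shift_le (F : nat -> R) n : (forall k, 0 <= F k) ->
  \sum_(i < n) (if (i.+1 < n)%N then F i.+1 else 0) <= \sum_(i < n) F i.
Proof.
move=> F0; case: n => [|n]; first by rewrite !big_ord0.
rewrite big_ord_recr /= ltnn addr0 big_ord_recl /=.
rewrite (eq_bigr (fun i : 'I_n => F i.+1)) ?lerDr // => i _.
by rewrite ltnS ltn_ord.
Qed.

Lemma sum_le_shift (F : nat -> R) n : (forall k, 0 <= F k) -> F 0%N = 0 ->
  \sum_(i < n) F i <= \sum_(i < n) F i.+1.
Proof.
move=> F0 F00; case: n => [|n]; first by rewrite !big_ord0.
by rewrite big_ord_recl F00 add0r big_ord_recr /= lerDl.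
Qed.

Lemma sqr_diff_le (p q : R) : (p - q) ^+ 2 <= 2 * p ^+ 2 + 2 * q ^+ 2.
Proof. by have := sqr_ge0 (p + q); lra. Qed.

End SquaredNorm.

Section Smoothness.
Variables (R : realType) (T t : nat).
Hypothesis T0 : (0 < T)%N.
Local Notation n := (T * t)%N.
Implicit Types x z u : 'rV[R]_n.

Lemma sqr_scale_le (a p : R) : 7/8 <= a -> a <= 1 -> (a * p) ^+ 2 <= p ^+ 2.
Proof. by move=> a1 a2; rewrite exprMn ler_piMl ?sqr_ge0 //; nra. Qed.

Lemma sum_sqr_link_le u : \sum_(k < n) link u k ^+ 2 <= 4 * sqnorm u.
Proof.
apply: (@le_trans _ _ (\sum_(k < n) (2 * pc u k.+1 ^+ 2 + 2 * pc u k ^+ 2))).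
  apply: ler_sum => k _; apply: le_trans (sqr_diff_le _ _) _.
  by rewrite lerD2l ler_wpM2l ?sqr_scale_le ?link_coef_ge ?link_coef_le.
rewrite big_split /= -!mulr_sumr.
have shift : \sum_(k < n) pc u k ^+ 2 <= \sum_(k < n) pc u k.+1 ^+ 2.
  by apply: (sum_le_shift (F := fun k => pc u k ^+ 2)) => [k|]; rewrite ?sqr_ge0 ?expr0n.
have sqE : \sum_(k < n) pc u k.+1 ^+ 2 = sqnorm u by apply: eq_bigr => i _; rewrite pcS.
by rewrite sqE in shift *; lra.
Qed.

Lemma sqnorm_gradq_le u : sqnorm (gradq u) <= 16 * sqnorm u.
Proof.
apply: (@le_trans _ _ (\sum_(i < n) (2 * link u i ^+ 2 +
     2 * (if (i.+1 < n)%N then link u i.+1 ^+ 2 else 0)))).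
  apply: ler_sum => i _; rewrite mxE.
  case: ifP => _; last by rewrite subr0 mulr0 addr0 ler_peMl ?sqr_ge0 //; lra.
  apply: le_trans (sqr_diff_le _ _) _.
  by rewrite lerD2l ler_wpM2l ?sqr_scale_le ?link_coef_ge ?link_coef_le.
rewrite big_split /= -!mulr_sumr.
have := sum_shift_le n (fun k => sqr_ge0 (link u k)).
have := sum_sqr_link_le u; lra.
Qed.

Lemma gradqB x z : gradq x - gradq z = gradq (x - z).
Proof. by apply/rowP => i; rewrite !mxE !linkB; case: ifP => _; ring. Qed.

Lemma sqnorm_gradvB_le x z : sqnorm (gradv x - gradv z) <= 1089 * sqnorm (x - z).
Proof.
rewrite /sqnorm mulr_sumr; apply: ler_sum => i _.
have := v_deriv_lipschitz (x 0 i) (z 0 i) (yvec_gt0 R i); rewrite !mxE.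
move: (v_deriv _ (x 0 i)) (v_deriv _ (z 0 i)) (x 0 i - z 0 i) => a b c.
rewrite -(real_normK (num_real (a - b))) -(real_normK (num_real c)).
have := normr_ge0 (a - b); have := normr_ge0 c; nra.
Qed.

Lemma smooth_g_fun : L_smooth (@g_fun R T t) 37.
Proof.
split=> [x|x z]; first by have [] := g_fun_differential x T0.
rewrite !grad_g_fun // /enorm -/(sqnorm _) -/(sqnorm _).
have -> : gradg x - gradg z = gradq (x - z) + (gradv x - gradv z).
  by rewrite /gradg -gradqB opprD addrACA.
have := sqnormD_le (gradq (x - z)) (gradv x - gradv z).
have := sqnorm_gradq_le (x - z); have := sqnorm_gradvB_le x z.
have := sqnorm_ge0 (x - z) => ? ? ? ?.
rewrite -[37]ger0_norm // -sqrtr_sqr -sqrtrM ?sqr_ge0 // ler_sqrt; first lra.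
by rewrite mulr_ge0 ?sqr_ge0.
Qed.

End Smoothness.

Lemma nat_interval_argmax d (X : orderType d) (f : nat -> X) l r : (l <= r)%N ->
  exists2 p, (l <= p <= r)%N & forall q, (l <= q <= r)%N -> (f q <= f p)%O.
Proof.
elim: r => [|r IH] lr.
  exists 0%N; first by rewrite lr.
  by move=> q /andP[_]; rewrite leqn0 => /eqP ->.
have qr q : (l <= q <= r.+1)%N -> q = r.+1 \/ (l <= q <= r)%N.
  by case/andP=> lq; rewrite leq_eqVlt ltnS => /orP[/eqP|]; [left | right; rewrite lq].
case: (ltnP r l) => rl.
  exists r.+1; first by rewrite lr leqnn.
  move=> q /qr[-> // | /andP[lq qr']].
  by have := leq_trans lq qr'; rewrite leqNgt rl.
have [p /andP[lp pr] pmax] := IH rl.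
case: (leP (f r.+1) (f p)) => fr.
  exists p; first by rewrite lp leqW.
  by move=> q /qr[-> // | /pmax].
exists r.+1; first by rewrite lr leqnn.
by move=> q /qr[-> // | /pmax fq]; exact: le_trans fq (ltW fr).
Qed.

Section ElementaryInequalities.
Variable R : realFieldType.
Implicit Types (a b p q r K Y : R).

Lemma mul_coef_le a q p : 7/8 <= a <= 1 -> q <= p -> 0 < p -> a * q <= p.
Proof.
case/andP=> a1 a2 qp p0.
have : a * q <= a * p by rewrite ler_wpM2l //; lra.
nra.
Qed.

Lemma peak_ineq a b p q r : 7/8 <= a <= 1 -> 7/8 <= b <= 1 -> 0 < p -> q <= p -> r <= p ->
  3/4 * p <= (1 + b ^+ 2) * p - a * q - b * r + p.
Proof.
move=> aI bI p0 qp rp; have := mul_coef_le aI qp p0; have := mul_coef_le bI rp p0.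
move: bI => /andP[b1 b2]; have := sqr_ge0 (b - 1/2); nra.
Qed.

Lemma prefix_ineq a p p' K : 7/8 <= a <= 1 -> 0 < p -> 0 < p' -> 0 <= K ->
  (1 + a ^+ 2) * p' - a * p < K -> a * p' <= K + 1/2 * p.
Proof.
move=> /andP[a1 a2] p0 p'0 K0 h.
have e1 : (1 + a ^+ 2) * (a * p') < a * (K + a * p).
  by rewrite mulrCA ltr_pM2l; lra.
have e2 : a * (K + a * p) <= (1 + a ^+ 2) * (K + 1/2 * p).
  rewrite -subr_ge0.
  have -> : (1 + a ^+ 2) * (K + 1 / 2 * p) - a * (K + a * p) =
            K * ((a - 1/2) ^+ 2 + 3/4) + p * (1 - a ^+ 2) / 2 by field.
  have := sqr_ge0 (a - 1/2); have : a ^+ 2 <= 1 by rewrite expr2; nra.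
  nra.
have a20 : 0 < 1 + a ^+ 2 by have := sqr_ge0 a; lra.
by rewrite ltW // -(ltr_pM2l a20) (lt_le_trans e1 e2).
Qed.

Lemma window_ineq a Y p : 7/8 <= a <= 1 -> 0 < Y -> 31/32 * Y < p ->
  1/4 * Y <= (1/2 + a ^+ 2) * p - a * (33/32 * Y).
Proof.
move=> /andP[a1 a2] Y0 hp.
have : (1/2 + a ^+ 2) * (31/32 * Y) <= (1/2 + a ^+ 2) * p.
  by rewrite ler_wpM2l ?ltW //; have := sqr_ge0 a; lra.
have : 0 <= (31/32 * a ^+ 2 - 33/32 * a + 15/64) * Y.
  apply: mulr_ge0; last lra.
  have : 0 <= (a - 7/8) * (1 - a) by apply: mulr_ge0; lra.
  by rewrite expr2; nra.
nra.
Qed.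

End ElementaryInequalities.

Section FirstWindow.
Variable R : realType.
Variables (n : nat) (P a Y Gf : nat -> R).
Hypotheses (P0 : P 0%N = 0) (Pn : P n.+1 = 0).
Hypotheses (a_ge : forall p, 7/8 <= a p) (a_le : forall p, a p <= 1).
Hypotheses (Y_gt0 : forall p, 0 < Y p) (Y_nonincr : forall p q, (p <= q)%N -> Y q <= Y p).
Hypothesis GfE : forall p, (0 < p <= n)%N ->
  Gf p = (1 + (if (p < n)%N then a p.+1 ^+ 2 else 0)) * P p - a p * P p.-1
         - a p.+1 * P p.+1 + v_deriv (Y p) (P p).

Let aI p : 7/8 <= a p <= 1. Proof. by rewrite a_ge a_le. Qed.

Lemma peak_grad_ge p : (0 < p <= n)%N -> ~~ in_window (Y p) (P p) -> 0 < P p ->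
  P p.-1 <= P p -> P p.+1 <= P p -> 3/4 * P p <= Gf p.
Proof.
move=> pn out Pp0 Pl Pr; rewrite GfE // v_deriv_out_window //.
case: ifP => p_lt_n; first exact: peak_ineq.
have ep : p = n by apply/eqP; rewrite eqn_leq (andP pn).2 leqNgt p_lt_n.
rewrite ep in Pl Pp0 *.
by rewrite Pn mulr0 subr0 addr0 mul1r; have := mul_coef_le (aI n) Pl Pp0; lra.
Qed.

Lemma window_grad_ge m : (0 < m <= n)%N -> in_window (Y m) (P m) ->
  P m.+1 <= 33/32 * Y m -> 1/4 * Y m + 1/2 * P m - a m * P m.-1 <= Gf m.
Proof.
move=> mn /[dup] win /andP[w1 w2] Pr; rewrite GfE //.
have := v_deriv_in_window_ge0 (Y_gt0 m) win; have := Y_gt0 m.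
case: ifP => m_lt_n.
  have : a m.+1 * P m.+1 <= a m.+1 * (33/32 * Y m).
    by rewrite ler_wpM2l //; have := a_ge m.+1; lra.
  have := window_ineq (aI m.+1) (Y_gt0 m) w1; lra.
have em : m = n by apply/eqP; rewrite eqn_leq (andP mn).2 leqNgt m_lt_n.
by rewrite em in w1 *; rewrite Pn mulr0 subr0 addr0 mul1r; lra.
Qed.

(* Look at the largest coordinate [p'] before [m]: it is outside its window, so
   either it is an interior peak, with gradient coordinate at least 3/4 of it, or
   [p' = m - 1] and [prefix_ineq] applies. *)
Lemma window_prefix_bound m K : (0 < m <= n)%N -> 0 <= K -> 0 < P m ->
  (forall p, (0 < p < m)%N -> ~~ in_window (Y p) (P p)) ->
  (forall p, (0 < p <= n)%N -> Gf p < K) ->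
  a m * P m.-1 <= 4/3 * K + 1/2 * P m.
Proof.
case/andP=> m0 m_le_n K0 Pm0 first_m Gf_lt.
case: (ltnP 1 m) => m1; last first.
  have -> : m.-1 = 0%N by lia.
  by rewrite P0 mulr0; lra.
have m1' : (1 <= m.-1)%N by lia.
have [p' /andP[p'1 p'm] pmax] := nat_interval_argmax P m1'.
have p'n : (0 < p' <= n)%N by lia.
have Pm1 : P m.-1 <= P p' by apply: pmax; lia.
case: (lerP (P p') 0) => P'0.
  have : a m * P m.-1 <= 0 by rewrite mulr_ge0_le0 //; [have := a_ge m | ]; lra.
  lra.
have Pl : P p'.-1 <= P p'.
  case: (ltnP 1 p') => p'_gt1; first by apply: pmax; lia.
  have -> : p'.-1 = 0%N by lia.
  by rewrite P0 ltW.
have out' : ~~ in_window (Y p') (P p') by apply: first_m; lia.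
case: (ltnP p' m.-1) => p'_lt.
  have : 3/4 * P p' <= Gf p' by apply: peak_grad_ge => //; apply: pmax; lia.
  by have := Gf_lt p' p'n; have := mul_coef_le (aI m) Pm1 P'0; lra.
have ep : p' = m.-1 by lia.
have hG := Gf_lt p' p'n; rewrite GfE // v_deriv_out_window // ifT in hG; last by lia.
rewrite (_ : p'.+1 = m) in hG; last by lia.
have hK : (1 + a m ^+ 2) * P p' - a m * P m < K.
  by have := mul_coef_le (aI p') Pl P'0; lra.
by have := prefix_ineq (aI m) Pm0 P'0 K0 hK; rewrite -ep; lra.
Qed.

(* By contradiction, with [q] the largest coordinate from [m] on: if [q] is in
   its window, every later coordinate is at most [33/32 * Y m] and coordinate [m]
   violates the bound; if not, [q] is a peak outside its window. *)
Lemma first_window_grad_large m : (0 < m <= n)%N -> in_window (Y m) (P m) ->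
  (forall p, (0 < p < m)%N -> ~~ in_window (Y p) (P p)) ->
  exists2 p, (0 < p <= n)%N & Y m / 10 <= `|Gf p|.
Proof.
move=> mn win first_m.
case: (pselect (exists2 p, (0 < p <= n)%N & Y m / 10 <= `|Gf p|)) => // Hn; exfalso.
have Gf_lt p : (0 < p <= n)%N -> Gf p < Y m / 10.
  move=> pn; rewrite ltNge; apply/negP => hp; apply: Hn; exists p => //.
  exact: le_trans hp (ler_norm _).
have Ym0 := Y_gt0 m; have K0 : 0 <= Y m / 10 by lra.
case/andP: (mn) (win) => m0 m_le_n /andP[w1 w2].
have Pm0 : 0 < P m by lra.
have pre := window_prefix_bound mn K0 Pm0 first_m Gf_lt.
have [q /andP[mq qn] qmax] := nat_interval_argmax P m_le_n.
have Pq : P m <= P q by apply: qmax; rewrite leqnn m_le_n.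
case: (boolP (in_window (Y q) (P q))) => winq.
  have Pm1 : P m.+1 <= 33/32 * Y m.
    case: (ltnP m n) => m_lt_n.
      have : P m.+1 <= P q by apply: qmax; lia.
      by have := Y_nonincr mq; case/andP: winq => _; lra.
    have -> : m.+1 = n.+1 by lia.
    by rewrite Pn; lra.
  by have := window_grad_ge mn win Pm1; have := Gf_lt m mn; lra.
have m_lt_q : (m < q)%N by rewrite ltn_neqAle mq andbT; apply: contraNneq winq => <-.
have qn' : (0 < q <= n)%N by lia.
have Pl : P q.-1 <= P q by apply: qmax; lia.
have Prq : P q.+1 <= P q.
  case: (ltnP q n) => q_lt_n; first by apply: qmax; lia.
  have -> : q.+1 = n.+1 by lia.
  by rewrite Pn; lra.
by have := peak_grad_ge qn' winq (lt_le_trans Pm0 Pq) Pl Prq; have := Gf_lt q qn'; lra.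
Qed.

End FirstWindow.

Section GeometricBlocks.
Variable R : realFieldType.

Lemma sum_le_widen (F : nat -> R) A N : (forall k, 0 <= F k) -> (A <= N)%N ->
  \sum_(j < A) F j <= \sum_(j < N) F j.
Proof.
move=> F0 AN; rewrite (big_ord_widen N F AN) big_mkcond /=.
by apply: ler_sum => j _; case: ifP.
Qed.

Lemma sum_pow_div_le (r : R) T N : (0 < T)%N -> 0 <= r -> r < 1 ->
  \sum_(j < N) r ^+ (j %/ T) <= T%:R / (1 - r).
Proof.
move=> T0 r0 r1.
apply: le_trans (sum_le_widen (fun k => exprn_ge0 (k %/ T) r0) (_ : N <= T * N)%N) _.
  by rewrite leq_pmull.
rewrite (big_ord_mul_blocks (fun j => r ^+ (j %/ T))).
rewrite (eq_bigr (fun i : 'I_N => T%:R * r ^+ i)) => [|i _]; last first.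
  rewrite (eq_bigr (fun _ => r ^+ i)) ?sumr_const ?card_ord ?mulr_natl // => j _.
  by rewrite divnMDl // divn_small // addn0.
rewrite -mulr_sumr ler_pdivlMr ?subr_gt0 // -mulrA ler_piMr ?ler0n //.
have -> : (\sum_(i < N) r ^+ i) * (1 - r) = 1 - r ^+ N.
  by rewrite mulrC -opprB mulNr -subrX1 opprB.
by rewrite gerDl oppr_le0 exprn_ge0.
Qed.

End GeometricBlocks.

Section PolyakLojasiewicz.
Variables (R : realType) (T t : nat).
Hypothesis T0 : (0 < T)%N.
Local Notation n := (T * t)%N.
Local Notation y := (yvec R T t).
Implicit Types x : 'rV[R]_n.

Definition ypaper (p : nat) : R := (7/8) ^+ (p.-1 %/ T).

Lemma ypaper_gt0 p : 0 < ypaper p. Proof. by rewrite exprn_gt0. Qed.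

Lemma ypaper_nonincr p q : (p <= q)%N -> ypaper q <= ypaper p.
Proof.
move=> pq; apply: ler_wiXn2l; [lra | lra | apply: leq_div2r; lia].
Qed.

Lemma yvec_ypaper (i : 'I_n) : y 0 i = ypaper i.+1.
Proof. by rewrite mxE. Qed.

Lemma pc_gradgE x p : (0 < p <= n)%N ->
  pc (gradg x) p = (1 + (if (p < n)%N then link_coef R T p ^+ 2 else 0)) * pc x p
    - link_coef R T p.-1 * pc x p.-1 - link_coef R T p * pc x p.+1
    + v_deriv (ypaper p) (pc x p).
Proof.
case: p => [//|i] /andP[_ i_lt_n].
rewrite (pcS (gradg x) (Ordinal i_lt_n)) !mxE -(pcS x (Ordinal i_lt_n)) /link !succnK.
case: ifP => i1n; first by ring.
rewrite (pc_out x (_ : n <= i.+1)%N); last by rewrite leqNgt i1n.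
by rewrite mulr0 !subr0 addr0 mul1r.
Qed.

Definition window_mass x : R :=
  \sum_(i < n) (if in_window (y 0 i) (x 0 i) then y 0 i ^+ 2 else 0).

(* [v_fun_le_deriv] turns [g] into half of [<grad g x, x>] up to the window mass, and
   [<grad g x, x> <= 4/7 |grad g x|^2 + 7/16 |x|^2 <= 4/7 |grad g x|^2 + g x]. *)
Lemma g_fun_le_grad_window x : g_fun x <= 4/7 * sqnorm (gradg x) + 2 * window_mass x.
Proof.
have g_le_dot : g_fun x <= 1/2 * rdot (gradg x) x + window_mass x.
  rewrite /g_fun q_funE // /gradg rdotDl rdot_gradq mulrDr -addrA lerD2l.
  rewrite /window_mass /rdot mulr_sumr -big_split; apply: ler_sum => i _ /=.
  apply: le_trans (v_fun_le_deriv (x 0 i) (yvec_gt0 R i)) _.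
  by rewrite [gradv x 0 i]mxE lerD2r; lra.
have dot_le : rdot (gradg x) x <= 4/7 * sqnorm (gradg x) + 7/16 * sqnorm x.
  rewrite /rdot /sqnorm !mulr_sumr -big_split; apply: ler_sum => i _ /=.
  move: (gradg x 0 i) (x 0 i) => p q; rewrite -subr_ge0.
  have -> : 4/7 * p ^+ 2 + 7/16 * q ^+ 2 - p * q = (8 * p - 7 * q) ^+ 2 / 112 by field.
  by rewrite divr_ge0 ?sqr_ge0.
have : 7/16 * sqnorm x <= g_fun x.
  by rewrite /g_fun; have := sum_v_fun_ge x; have := q_fun_ge0 T0 x; rewrite /sqnorm; lra.
lra.
Qed.

Lemma window_mass_le x m : (0 < m <= n)%N ->
  (forall i : 'I_n, in_window (y 0 i) (x 0 i) -> (m <= i.+1)%N) ->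
  window_mass x <= ypaper m ^+ 2 * (64/15 * T%:R).
Proof.
move=> mn first_m; set r : R := (7/8) ^+ 2.
have r0 : 0 <= r by rewrite sqr_ge0.
have r1 : r < 1 by rewrite /r; lra.
apply: (@le_trans _ _ (\sum_(i < n)
    (if (m.-1 <= i)%N then r ^+ (m.-1 %/ T) * r ^+ ((i - m.-1) %/ T) else 0))).
  apply: ler_sum => i _; case: ifP => win; last by case: ifP => // _; rewrite mulr_ge0 ?exprn_ge0.
  have mi : (m.-1 <= i)%N by have := first_m i win; lia.
  rewrite mi mxE -exprAC -/r -exprD; apply: ler_wiXn2l => //; first exact: ltW.
  by rewrite -[X in (_ <= X %/ T)%N](subnKC mi) divnD // leq_addr.
rewrite (eq_bigr (fun i : 'I_n => r ^+ (m.-1 %/ T) *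
    (if (m.-1 <= i)%N then r ^+ ((i - m.-1) %/ T) else 0))) => [|i _]; last first.
  by case: ifP; rewrite ?mulr0.
rewrite -mulr_sumr (big_ord_tail (fun j => r ^+ (j %/ T)) m.-1 n) /ypaper -exprAC -/r.
apply: ler_wpM2l; first exact: exprn_ge0.
have -> : 64/15 * T%:R = T%:R / (1 - r) :> R by rewrite /r expr2; field.
exact: sum_pow_div_le.
Qed.

Lemma first_window_sqr_le x m : (0 < m <= n)%N -> in_window (ypaper m) (pc x m) ->
  (forall p, (0 < p < m)%N -> ~~ in_window (ypaper p) (pc x p)) ->
  ypaper m ^+ 2 <= 100 * sqnorm (gradg x).
Proof.
move=> mn winm first_m.
have [p pn large] := first_window_grad_large (pc0 x) (pc_out x (leqnn n))
  (fun p => link_coef_ge R T p.-1) (fun p => link_coef_le R T p.-1) ypaper_gt0 ypaper_nonincr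
  (pc_gradgE x) mn winm first_m.
have := sqr_pc_le_sqnorm (gradg x) pn; have := ypaper_gt0 m.
rewrite -(real_normK (num_real (pc (gradg x) p))).
by move: large; move: (`|_|) => u; nra.
Qed.

Lemma g_fun_le_sqnorm_grad x : g_fun x <= 854 * T%:R * sqnorm (gradg x).
Proof.
have G0 := sqnorm_ge0 (gradg x).
have T1 : 1 <= T%:R :> R by rewrite ler1n.
have := g_fun_le_grad_window x.
case: (pselect (exists i : 'I_n, in_window (y 0 i) (x 0 i))) => [[i0 win0] | no_win]; last first.
  rewrite (_ : window_mass x = 0); first by nra.
  by apply: big1 => i _; case: ifP => // win; case: no_win; exists i.
have exS : exists p, (0 < p <= n)%N && in_window (ypaper p) (pc x p).
  by exists i0.+1; rewrite ltn_ord pcS -yvec_ypaper win0.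
case: (ex_minnP exS) => m /andP[mn winm] m_min.
have first_m p : (0 < p < m)%N -> ~~ in_window (ypaper p) (pc x p).
  move=> /andP[p0 pm]; apply/negP => winp.
  by have := m_min p; rewrite p0 winp (leq_trans (ltnW pm) (andP mn).2) => /(_ isT); lia.
have mass : window_mass x <= ypaper m ^+ 2 * (64/15 * T%:R).
  by apply: window_mass_le => // i win; apply: m_min; rewrite ltn_ord pcS -yvec_ypaper win.
have : ypaper m ^+ 2 * T%:R <= 100 * sqnorm (gradg x) * T%:R.
  by rewrite ler_wpM2r // first_window_sqr_le.
have : sqnorm (gradg x) <= T%:R * sqnorm (gradg x) by rewrite ler_peMl.
lra.
Qed.

Lemma PL_g_fun : PL (@g_fun R T t) (1 / (2000 * T%:R)).
Proof.
split=> [x|x]; first by have [] := g_fun_differential x T0.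
rewrite grad_g_fun // inf_g_fun // subr0 /enorm -/(sqnorm _) sqr_sqrtr ?sqnorm_ge0 //.
have T0' : 0 < T%:R :> R by rewrite ltr0n.
have -> : 2 * (1 / (2000 * T%:R)) * g_fun x = g_fun x / T%:R / 1000.
  by field; rewrite gt_eqF.
have : g_fun x / T%:R <= 854 * sqnorm (gradg x).
  by rewrite ler_pdivrMr // mulrAC g_fun_le_sqnorm_grad.
by have := sqnorm_ge0 (gradg x); lra.
Qed.

End PolyakLojasiewicz.

Theorem lemma1 (R : realType) :
  (forall T t : nat, (1 <= T)%N -> (1 <= t)%N ->
     zero_chain (fun x : 'rV[R]_(T * t) => g_fun (yvec R T t - x))
     /\ (forall x : 'rV[R]_(T * t), g_fun (0 : 'rV[R]_(T * t)) <= g_fun x)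
     /\ inf (range (@g_fun R T t)) = 0
     /\ (forall x : 'rV[R]_(T * t),
           g_fun x <= 1/2 * (x *m (Bmat R T t + 1%:M) *m x^T) 0 0)
     /\ L_smooth (@g_fun R T t) 37)
  /\
  (exists C3 : R, 0 < C3 /\
     forall T t : nat, (1 <= T)%N -> (1 <= t)%N ->
       PL (@g_fun R T t) (1 / (C3 * T%:R))).
Proof.
split=> [T t T0 _ | ].
  split; first exact: zero_chain_g_shifted.
  split; first by move=> x; rewrite g_fun0 // g_fun_ge0.
  split; first exact: inf_g_fun.
  split; first exact: g_fun_le_quad.
  exact: smooth_g_fun.
by exists 2000; split=> [|T t T0 _]; [lra | exact: PL_g_fun].
Qed.
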